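(* Every quantifier-free lifted Bayesian network $\mathfrak{G}$ over a relational signature $\sigma$ induces a projective family of distributions. In particular, $\mathfrak{G}$ has an asymptotic limit.
   Context: A relational signature $\sigma$ is a set of relation symbols (possibly multi-sorted, without equality). A functional lifted Bayesian network (FLBN) over $\sigma$ consists of a directed acyclic graph $G$ with node set $\sigma$, for each $R\in\sigma$ a finite tuple $(\chi_{R,i}(\vec{x},\vec{y}))_{i\le n_R}$ of first-order formulas over the signature of the $G$-parents of $R$ ($\vec{x}$ a sort-appropriate tuple of variables of length the arity of $R$), and a continuous $f_R:[0,1]^{n_R}\to[0,1]$. On a finite domain $D$ it induces the distribution on $\sigma$-structures with domain $D$ given by the Bayesian network with nodes the ground atoms $R(\vec{a})$, edges from $R_1(\vec{b})$ to $R_2(\vec{a})$ whenever $R_1\to R_2$ in $G$, and $R(\vec{a})$ true with probability $f_R\big((\|\chi_{R,i}(\vec{a},\vec{y})\|_{\vec{y}})_i\big)$, where $\|\chi(\vec{a},\vec{y})\|_{\vec{y}}$ is the fraction of sort-appropriate tuples $\vec{b}$ for $\vec{y}$ with $\chi(\vec{a},\vec{b})$ true in the structure given by the parent values. A quantifier-free lifted Bayesian network is an FLBN in which every $\chi_{R,i}$ is quantifier-free with all variables among $\vec{x}$. Domains are taken to be initial segments of $\mathbb{N}$ in each sort, with sort sizes $\vec{n}$; write $\mathbb{P}_{\vec{n}}$ for the induced distribution. Let $\Omega_\infty$ be the set of $\sigma$-structures with every sort equal to $\mathbb{N}$, with the $\sigma$-algebra generated by the generating sets $A$: for elements $a_1,\dots,a_m$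 and a $\sigma$-structure $\mathfrak{Y}$ on $\{a_1,\dots,a_m\}$, the set of structures whose induced substructure on $\{a_1,\dots,a_m\}$ is $\mathfrak{Y}$; $\mathbb{P}_{\vec{n}}(A)$ is defined (as the probability that the induced substructure on $\{a_1,\dots,a_m\}$ is $\mathfrak{Y}$) whenever each $a_i$ lies in the domain of its sort. A family $(\mathbb{P}_{\vec{n}})$ is projective if for every generating set $A$ the sequence $\mathbb{P}_{\vec{n}}(A)$ is constant wherever defined. A probability measure $\mathbb{P}_\infty$ on $\Omega_\infty$ is the asymptotic limit of $\mathfrak{G}$ if for every sequence of domains monotone and unbounded in the cardinality of every sort and every generating set $A$, the probabilities of $A$ converge to $\mathbb{P}_\infty(A)$. *)

From HB Require Import structures.
From mathcomp Require Import all_boot all_order all_algebra.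
From mathcomp Require Import all_classical all_reals all_analysis.

Set Implicit Arguments.
Unset Strict Implicit.
Unset Printing Implicit Defensive.

Import Order.TTheory GRing.Theory Num.Theory.
Import numFieldNormedType.Exports.

Local Open Scope ring_scope.
Local Open Scope classical_set_scope.

(* Elements of a domain of sort [s] with size [n s] are [0, ..., n s - 1].
   Variables carry their sort: a variable is a pair [(s, i)] = the i-th
   variable of sort s. *)

Section Syntax.
Variables (S Rel : finType).

Definition var := (S * nat)%type.

Inductive formula : Type :=
| FTrue
| FAtom (r : Rel) (args : seq var)
| FNot (f : formula)
| FAnd (f g : formula)
| FOr (f g : formula)
| FExists (v : var) (f : formula)
| FForall (v : var) (f : formula).

Fixpoint qfree (f : formula) : bool :=
  match f with
  | FTrue | FAtom _ _ => true
  | FNot g => qfree g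
  | FAnd g h | FOr g h => qfree g && qfree h
  | FExists _ _ | FForall _ _ => false
  end.

Fixpoint fvars (f : formula) : seq var :=
  match f with
  | FTrue => [::]
  | FAtom _ a => a
  | FNot g => fvars g
  | FAnd g h | FOr g h => fvars g ++ fvars h
  | FExists v g | FForall v g => [seq u <- fvars g | u != v]
  end.

Fixpoint allvars (f : formula) : seq var :=
  match f with
  | FTrue => [::]
  | FAtom _ a => a
  | FNot g => allvars g
  | FAnd g h | FOr g h => allvars g ++ allvars h
  | FExists v g | FForall v g => v :: allvars g
  end.

Fixpoint rels (f : formula) : seq Rel :=
  match f with
  | FTrue => [::]
  | FAtom r _ => [:: r]
  | FNot g => rels g
  | FAnd g h | FOr g h => rels g ++ rels h
  | FExists _ g | FForall _ g => rels g
  end.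

Variable ar : Rel -> seq S.

Fixpoint well_sorted (f : formula) : bool :=
  match f with
  | FTrue => true
  | FAtom r a => map fst a == ar r
  | FNot g => well_sorted g
  | FAnd g h | FOr g h => well_sorted g && well_sorted h
  | FExists _ g | FForall _ g => well_sorted g
  end.

(** Semantics.  A structure with sort sizes [n] is given by a function
    [w : Rel -> seq nat -> bool]; only its values on sort-appropriate
    in-domain tuples matter. *)
Definition structure := Rel -> seq nat -> bool.

Definition upd (e : var -> nat) (v : var) (k : nat) : var -> nat :=
  fun u => if u == v then k else e u.

Fixpoint eval (n : S -> nat) (w : structure) (e : var -> nat) (f : formula)
  : bool :=
  match f with
  | FTrue => true
  | FAtom r a => w r (map e a)
  | FNot g => ~~ eval n w e g
  | FAnd g h => eval n w e g && eval n w e h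
  | FOr g h => eval n w e g || eval n w e h
  | FExists v g => has (fun k => eval n w (upd e v k) g) (iota 0 (n v.1))
  | FForall v g => all (fun k => eval n w (upd e v k) g) (iota 0 (n v.1))
  end.

Fixpoint tuples (n : S -> nat) (ss : seq S) : seq (seq nat) :=
  match ss with
  | [::] => [:: [::]]
  | s :: ss' => [seq k :: t | k <- iota 0 (n s), t <- tuples n ss']
  end.

(* the canonical tuple x of free variables for relation r:
   x_j is the variable (ar r)_j indexed j *)
Definition xvars (r : Rel) : seq var := zip (ar r) (iota 0 (size (ar r))).

Definition assign (r : Rel) (ys : seq var) (a b : seq nat) : var -> nat :=
  fun v => if v \in xvars r then nth 0%N a (index v (xvars r))
           else if v \in ys then nth 0%N b (index v ys) else 0%N.

End Syntax.

Arguments FTrue {S Rel}.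

Section FLBN.
Variables (R : realType) (S Rel : finType) (ar : Rel -> seq S).

(* A combination formula chi(x, y): the tuple y of variables and the
   formula. *)
Definition cformula := (seq (var S) * formula S Rel)%type.

Record flbn := FLBN {
  dag : rel Rel;                          (* edge R1 -> R2 : dag R1 R2 *)
  chis : Rel -> seq cformula;
  comb : forall r : Rel, 'rV[R]_(size (chis r)) -> R
}.

Definition acyclic (e : rel Rel) : Prop :=
  ~ exists (x : Rel) (p : seq Rel), [&& p != [::], path e x p & last x p == x].

Definition unit_cube (k : nat) : set 'rV[R]_k :=
  [set v | forall i, 0 <= v ord0 i <= 1].

Definition cformula_wf (G : rel Rel) (r : Rel) (c : cformula) : bool :=
  let: (ys, f) := c in
  [&& uniq ys, all (fun y => y \notin xvars ar r) ys,
      well_sorted ar f,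
      all (fun r' => G r' r) (rels f) &
      all (fun v => (v \in xvars ar r) || (v \in ys)) (fvars f)].

Definition flbn_wf (B : flbn) : Prop :=
  [/\ acyclic (dag B),
      (forall r, all (cformula_wf (dag B) r) (chis B r)),
      (forall r, let K := @unit_cube (size (chis B r)) in
                 {within K, continuous (@comb B r)}) &
      (forall r v, v \in @unit_cube (size (chis B r)) -> 0 <= @comb B r v <= 1)].

Definition qf_lbn (B : flbn) : Prop :=
  forall r, all (fun c => qfree c.2 &&
                  all (fun v => v \in xvars ar r) (allvars c.2)) (chis B r).

Definition frac (n : S -> nat) (w : structure Rel) (r : Rel) (c : cformula)
  (a : seq nat) : R :=
  let bs := tuples n (map fst c.1) in
  (count (fun b => eval n w (assign ar r c.1 a b) c.2) bs)%:R / (size bs)%:R.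

Definition atom_prob (B : flbn) (n : S -> nat) (w : structure Rel) (r : Rel)
  (a : seq nat) : R :=
  @comb B r (\row_(i < size (chis B r)) frac n w r (nth ([::], FTrue) (chis B r) i) a).

Definition ground_atoms (n : S -> nat) : seq (Rel * seq nat) :=
  [seq (r, t) | r <- enum Rel, t <- tuples n (ar r)].

Fixpoint bitseqs (k : nat) : seq bitseq :=
  if k is k'.+1 then [seq b :: s | b <- [:: true; false], s <- bitseqs k']
  else [:: [::]].

Definition world_of (n : S -> nat) (bs : bitseq) : structure Rel :=
  fun r t => nth false bs (index (r, t) (ground_atoms n)).

Definition world_prob (B : flbn) (n : S -> nat) (w : structure Rel) : R :=
  \prod_(g <- ground_atoms n)
     (if w g.1 g.2 then atom_prob B n w g.1 g.2 else 1 - atom_prob B n w g.1 g.2).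

(** Generating sets.  [E] lists the elements a_1..a_m (each with its sort),
    [Y] gives the structure on them. *)
Fixpoint etuples (E : seq (var S)) (ss : seq S) : seq (seq nat) :=
  match ss with
  | [::] => [:: [::]]
  | s :: ss' => [seq k :: t | k <- [seq e.2 | e <- E & e.1 == s],
                              t <- etuples E ss']
  end.

Definition in_cyl (E : seq (var S)) (Y : structure Rel) (w : structure Rel)
  : bool :=
  all (fun r => all (fun t => w r t == Y r t) (etuples E (ar r))) (enum Rel).

(* P_n(A) is defined: every a_i lies in the domain of its sort *)
Definition cyl_defined (n : S -> nat) (E : seq (var S)) : bool :=
  all (fun e => e.2 < n e.1)%N E.

Definition Pn (B : flbn) (n : S -> nat) (E : seq (var S)) (Y : structure Rel)
  : R :=
  \sum_(bs <- bitseqs (size (ground_atoms n)))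
     world_prob B n (world_of n bs) * (in_cyl E Y (world_of n bs))%:R.

Definition nonempty_domain (n : S -> nat) : bool := [forall s, 0 < n s]%N.

Definition projective (B : flbn) : Prop :=
  forall (E : seq (var S)) (Y : structure Rel) (n n' : S -> nat),
    nonempty_domain n -> nonempty_domain n' ->
    cyl_defined n E -> cyl_defined n' E ->
    Pn B n E Y = Pn B n' E Y.

(** The space Omega_infty of structures with all sorts equal to nat,
    with the sigma-algebra generated by the generating sets. *)
Definition Omega := structure Rel.

Definition cyl (E : seq (var S)) (Y : structure Rel) : set Omega :=
  [set w | in_cyl E Y w].

Definition gen_sets : set (set Omega) :=
  [set A | exists E Y, A = cyl E Y].

Definition OmegaInf := g_sigma_algebraType gen_sets.

Definition asymptotic_limit (B : flbn) (P : probability OmegaInf R) : Prop :=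
  forall (ns : nat -> S -> nat),
    (forall k s, (ns k s <= ns k.+1 s)%N) ->
    (forall s M, exists k, (M <= ns k s)%N) ->
    forall (E : seq (var S)) (Y : structure Rel),
      (fun k => Pn B (ns k) E Y) @ \oo --> fine (P (cyl E Y)).

End FLBN.

(* For a quantifier-free network the probability of [R(a)] depends only on the
   parent atoms whose arguments occur in [a], and not on the domain sizes.  The
   ground atoms over finitely many elements [E] are closed under parents, so
   summing out the other ground atoms, one childless atom at a time (each
   contributes [p + (1 - p) = 1]), leaves a finite network independent of the
   domain: this is projectivity.  The common values form a finitely additive
   measure on cylinder sets.  These are clopen in the compact product space
   [{0, 1}^atoms], so a cylinder that is a countable disjoint union of cylinders
   is a finite such union; hence the premeasure is sigma-additive and extends
   to a probability on the generated sigma-algebra.  Along any domain sequence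
   the probability of a cylinder is eventually equal to its measure. *)

From Pilot Require Import Defs.
From HB Require Import structures.
From mathcomp Require Import all_boot all_order all_algebra.
From mathcomp Require Import all_classical all_reals all_analysis.

Set Implicit Arguments.
Unset Strict Implicit.
Unset Printing Implicit Defensive.

Import Order.TTheory GRing.Theory Num.Theory.
Import numFieldNormedType.Exports.

Local Open Scope ring_scope.

Section BooleanSums.
Variables (R : comPzRingType) (X : eqType).
Implicit Types (L : seq X) (w : X -> bool) (G : (X -> bool) -> R).

Definition fupd (y : X) (b : bool) w : X -> bool :=
  fun x => if y == x then b else w x.

Lemma fupd_same y b w : fupd y b w y = b.
Proof. by rewrite /fupd eqxx. Qed.

Lemma fupd_other y b w x : y != x -> fupd y b w x = w x.
Proof. by rewrite /fupd => /negbTE ->. Qed.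

Lemma fupdC y z b c w : y != z -> fupd y b (fupd z c w) = fupd z c (fupd y b w).
Proof.
move=> yz; apply: boolp.funext => x; rewrite /fupd.
by case: (eqVneq y x) => [<-|//]; rewrite eq_sym (negbTE yz).
Qed.

(* [bsum L G] sums [G] over the [2 ^ size L] valuations that are arbitrary on
   [L] and [false] elsewhere. *)
Fixpoint bsum L G : R :=
  if L is y :: L' then
    bsum L' (fun w => G (fupd y true w)) + bsum L' (fun w => G (fupd y false w))
  else G (fun _ => false).

Lemma eq_bsum L G G' : G =1 G' -> bsum L G = bsum L G'.
Proof. by move=> /boolp.funext ->. Qed.

Lemma bsumD L G G' : bsum L (fun w => G w + G' w) = bsum L G + bsum L G'.
Proof. by elim: L G G' => [|y L IH] G G' //=; rewrite !IH addrACA. Qed.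

Lemma bsumZ L c G : bsum L (fun w => c * G w) = c * bsum L G.
Proof. by elim: L c G => [|y L IH] c G //=; rewrite !IH mulrDr. Qed.

Lemma bsum_swap y z L G : y != z -> bsum [:: y, z & L] G = bsum [:: z, y & L] G.
Proof.
move=> yz /=.
have swap b c : (fun w => G (fupd y b (fupd z c w))) =
                (fun w => G (fupd z c (fupd y b w))).
  by apply: boolp.funext => w; rewrite fupdC.
by rewrite !swap addrACA.
Qed.

Lemma bsum_rem y L G : y \in L -> bsum L G = bsum (y :: rem y L) G.
Proof.
elim: L G => [|z L IH] G //=; rewrite in_cons.
have [->|zy] //= := eqVneq z y; move=> yL.
by rewrite !(IH _ yL) -[RHS]/(bsum [:: y, z & rem y L] G) bsum_swap // eq_sym.
Qed.

Lemma perm_bsum L L' G : perm_eq L L' -> bsum L G = bsum L' G.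
Proof.
elim: L L' G => [|y L IH] L' G; first by rewrite perm_sym => /perm_nilP ->.
move=> pLL'; have yL' : y \in L' by rewrite -(perm_mem pLL') mem_head.
have pL : perm_eq L (rem y L').
  by rewrite -(perm_cons y) (perm_trans pLL') // perm_to_rem.
by rewrite (bsum_rem G yL') /= !(IH (rem y L')).
Qed.

Lemma bsum_cons_weight y L (q G : (X -> bool) -> R) :
  (forall b w, q (fupd y b w) = q w) -> (forall b w, G (fupd y b w) = G w) ->
  bsum (y :: L) (fun w => (if w y then q w else 1 - q w) * G w) = bsum L G.
Proof.
move=> qy Gy /=; rewrite -bsumD; apply: eq_bsum => w.
by rewrite !fupd_same !qy !Gy -mulrDl addrC subrK mul1r.
Qed.

Lemma bsum_bitseqs L G :
  \sum_(bs <- bitseqs (size L)) G (fun x => nth false bs (index x L)) = bsum L G.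
Proof.
elim: L G => [|y L IH] G; first by rewrite /= big_cons big_nil addr0.
rewrite /= big_cat /= big_cat /= big_nil addr0 !big_map -!IH.
by congr (_ + _); apply: eq_bigr => bs _; congr G; apply: boolp.funext => x;
  rewrite /fupd; case: (y == x).
Qed.

End BooleanSums.

Lemma bsum_ge0 (R : numDomainType) (X : eqType) L (G : (X -> bool) -> R) :
  (forall w, 0 <= G w) -> 0 <= bsum L G.
Proof. by elim: L G => [|y L IH] G G0 //=; rewrite addr_ge0 ?IH. Qed.

Definition has_sinks (T : eqType) (e : rel T) : Prop :=
  forall K : seq T, K != [::] -> exists2 y, y \in K & {in K, forall x, ~~ e y x}.

Lemma has_sinks_homo (T U : eqType) (f : T -> U) (e : rel T) (e' : rel U) :
  {homo f : x y / e x y >-> e' x y} -> has_sinks e' -> has_sinks e.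
Proof.
move=> fe sinks K K0; have [|_ /mapP[y yK ->] ysink] := sinks (map f K).
  by case: (K) K0.
exists y => // x xK; apply: contra (ysink _ (map_f f xK)); exact: fe.
Qed.

Lemma acyclic_has_sinks (T : finType) (e : rel T) : acyclic e -> has_sinks e.
Proof.
(* Without a sink, iterating a choice of successors inside [K] must revisit a
   point, which closes a cycle. *)
move=> acyc K K0; apply: contrapT => nosink; apply: acyc.
have succ y : y \in K -> exists2 z, z \in K & e y z.
  move=> yK; apply/exists_inP; apply: contraT => /exists_inPn ysink.
  by case: nosink; exists y.
pose f y := odflt y [pick z in K | e y z].
have fK y : y \in K -> (f y \in K) && e y (f y).
  move=> /succ[z zK eyz]; rewrite /f; case: pickP => [z' /andP[-> ->] //|].
  by move/(_ z); rewrite zK eyz.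
have [x0 x0K] : exists x0, x0 \in K.
  by case: (K) K0 => // x0 K' _; exists x0; rewrite mem_head.
have iterK k : iter k f x0 \in K by elim: k => //= k /fK/andP[].
have /trajectP[i lt_i_ord] := looping_order f x0; set x := iter i f x0 => ordx.
exists x, (traject f (f x) (order f x0 - i)).
rewrite last_traject -iterD subnK ?(ltnW lt_i_ord) // ordx eqxx andbT.
rewrite -size_eq0 size_traject subn_eq0 -ltnNge lt_i_ord /=.
apply: (sub_in_path (P := mem K)) (fpath_traject f x _).
  by move=> y z yK _ /eqP <-; case/andP: (fK y yK).
apply/allP => y; rewrite -trajectS => /trajectP[k _ ->].
by rewrite /x -iterD; apply: iterK.
Qed.

Section BayesNetMarginal.
Variables (R : comPzRingType) (X : eqType).
Variables (p : X -> (X -> bool) -> R) (parent : rel X).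

Definition bn_factor x (w : X -> bool) : R := if w x then p x w else 1 - p x w.

(* Summing out, one at a time, nodes of [L] outside [A] that are parents of no
   remaining node; each such step multiplies by [p + (1 - p) = 1]. *)
Lemma bn_marginal L A (Psi : (X -> bool) -> R) :
  uniq L -> uniq A -> {subset A <= L} ->
  {in L, forall x w w', {in parent^~ x, w =1 w'} -> p x w = p x w'} ->
  {in A, forall x z, parent z x -> z \in A} ->
  has_sinks parent ->
  (forall w w', {in A, w =1 w'} -> Psi w = Psi w') ->
  bsum L (fun w => \prod_(x <- L) bn_factor x w * Psi w) =
  bsum A (fun w => \prod_(x <- A) bn_factor x w * Psi w).
Proof.
move=> + uA + + Aclosed sinks Psi_loc.
pose marginal K := bsum K (fun w => \prod_(x <- K) bn_factor x w * Psi w).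
have perm_case K : uniq K -> {subset A <= K} ->
    [seq x <- K | x \notin A] = [::] -> marginal K = marginal A.
  move=> uK AK K0; have KA : K =i A.
    move=> x; apply/idP/idP => [xK|/AK //]; apply: contraT => xA.
    have : x \in [seq x <- K | x \notin A] by rewrite mem_filter xA xK.
    by rewrite K0.
  have pKA := uniq_perm uK uA KA.
  rewrite /marginal (perm_bsum _ pKA).
  by apply: eq_bsum => w; rewrite (perm_big _ pKA).
elim: {L}(size L) {-2}L (leqnn (size L)) => [|m IH] L szL uL AL p_loc;
  have [K0|] := eqVneq [seq x <- L | x \notin A] [::]; try exact: perm_case.
  by move: szL; rewrite leqn0 => /nilP ->.
case/sinks=> y; rewrite mem_filter => /andP[yA yL] ysink.
set L1 := rem y L.
have L1L : {subset L1 <= L} by move=> x; apply: mem_rem.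
have not_parent x : x \in y :: L1 -> ~~ parent y x.
  move=> xyL; have [xA|xA] := boolP (x \in A).
    by apply: contraNN yA; apply: Aclosed.
  apply: ysink; rewrite mem_filter xA.
  by move: xyL; rewrite in_cons => /predU1P[->|/L1L].
have p_fupd x b w : x \in y :: L1 -> p x (fupd y b w) = p x w.
  move=> xyL; apply: p_loc => [|z zx].
    by move: xyL; rewrite in_cons => /predU1P[->|/L1L].
  by apply: fupd_other; apply: contraNneq (not_parent x xyL) => ->.
rewrite (bsum_rem _ yL) -/L1.
under eq_bsum => w do rewrite (perm_big _ (perm_to_rem yL)) big_cons -/L1 -mulrA.
rewrite bsum_cons_weight; first apply: IH.
- by rewrite size_rem // -subn1 leq_subLR add1n.
- exact: rem_uniq.
- move=> x xA; rewrite mem_rem_uniq // inE (AL x xA) andbT.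
  by apply: contraNneq yA => <-.
- by move=> x /L1L; apply: p_loc.
- by move=> b w; rewrite p_fupd ?mem_head.
- move=> b w; congr (_ * _).
    apply: eq_big_seq => x xL1; have yx : y != x.
      by apply: contraTneq xL1 => <-; rewrite mem_rem_uniqF.
    by rewrite /bn_factor fupd_other // p_fupd // in_cons xL1 orbT.
  by apply: Psi_loc => z zA; apply: fupd_other; apply: contraNneq yA => ->.
Qed.

End BayesNetMarginal.

Lemma mem_allpairs_cons (T : eqType) (s : seq T) (ss : seq (seq T)) k t :
  (k :: t \in [seq a :: b | a <- s, b <- ss]) = (k \in s) && (t \in ss).
Proof.
apply/allpairsP/andP => [[[a b] /= [ka tb [-> ->]]] //|[ks ts]].
by exists (k, t).
Qed.

Lemma nil_notin_allpairs_cons (T : eqType) (s : seq T) (ss : seq (seq T)) :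
  ([::] \in [seq a :: b | a <- s, b <- ss]) = false.
Proof. by apply/allpairsP => -[[a b] [_ _]]. Qed.

Section Formulas.
Variables (S Rel : finType) (ar : Rel -> seq S).
Implicit Types (n : S -> nat) (E : seq (var S)) (w : structure Rel).

Lemma mem_tuples n ss t :
  (t \in tuples n ss) =
  (size t == size ss) && all (fun p => p.2 < n p.1)%N (zip ss t).
Proof.
elim: ss t => [|s ss IH] [|k t] //=; first by rewrite nil_notin_allpairs_cons.
by rewrite mem_allpairs_cons IH mem_iota add0n /= eqSS andbCA.
Qed.

Lemma mem_etuples E ss t :
  (t \in etuples E ss) = (size t == size ss) && all (fun x => x \in E) (zip ss t).
Proof.
elim: ss t => [|s ss IH] [|k t] //=; first by rewrite nil_notin_allpairs_cons.
rewrite mem_allpairs_cons IH eqSS andbCA /=.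
suff -> : (k \in [seq e.2 | e <- E & e.1 == s]) = ((s, k) \in E) by [].
apply/mapP/idP => [[e]|skE]; last by exists (s, k); rewrite // mem_filter eqxx.
by rewrite mem_filter => /andP[/eqP <- eE] ->; case: e eE.
Qed.

Lemma etuples_sub E E' ss :
  {subset E <= E'} -> {subset etuples E ss <= etuples E' ss}.
Proof.
move=> EE' t; rewrite !mem_etuples => /andP[-> /allP tE].
by apply/allP => x /tE /EE'.
Qed.

Lemma uniq_tuples n ss : uniq (tuples n ss).
Proof.
elim: ss => [|s ss IH] //=; apply: allpairs_uniq => //; first exact: iota_uniq.
by move=> [a b] [c d] _ _ /= [-> ->].
Qed.

Lemma size_tuples_gt0 n ss : nonempty_domain n -> (0 < size (tuples n ss))%N.
Proof.
move=> /forallP n_gt0; elim: ss => [|s ss IH] //=.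
by rewrite size_allpairs muln_gt0 size_iota n_gt0.
Qed.

Lemma uniq_ground_atoms n : uniq (ground_atoms ar n).
Proof.
apply: (allpairs_uniq_dep (T := fun _ => seq nat)); first exact: enum_uniq.
  by move=> r _; exact: uniq_tuples.
by move=> [r t] [r' t'] _ _ /= [-> ->].
Qed.

Lemma mem_ground_atoms n x : (x \in ground_atoms ar n) = (x.2 \in tuples n (ar x.1)).
Proof.
apply/allpairsPdep/idP => [[r [t [_ tE ->]]] //|xE].
by exists x.1, x.2; rewrite mem_enum xE; case: x xE.
Qed.

Lemma mem_xvars r v : v \in xvars ar r ->
  [/\ (v.2 < size (ar r))%N, v.1 = nth v.1 (ar r) v.2 & index v (xvars ar r) = v.2].
Proof.
have uniq_xvars : uniq (xvars ar r).
  apply: (@map_uniq _ _ snd).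
  by rewrite -/(unzip2 _) unzip2_zip ?size_iota ?iota_uniq.
have nth_xvars d i :
    (i < size (ar r))%N -> nth d (xvars ar r) i = (nth d.1 (ar r) i, i).
  by case: d => s0 j0 ir; rewrite /xvars nth_zip ?size_iota // nth_iota.
case: v => s j vx; have [i] := nthP (s, j) vx.
rewrite size_zip size_iota minnn => ir; rewrite nth_xvars // => -[<- <-] /=.
split => //; first exact: set_nth_default.
by rewrite -[(_, i)](nth_xvars (s, j) i ir) index_uniq // size_zip size_iota minnn.
Qed.

Lemma eval_qfree_size n n' w e (f : formula S Rel) :
  qfree f -> Defs.eval n w e f = Defs.eval n' w e f.
Proof.
by elim: f => //= [g IH /IH ->|g IHg h IHh|g IHg h IHh] // /andP[/IHg -> /IHh ->].
Qed.

Lemma eq_eval_env n w e e' (f : formula S Rel) :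
  qfree f -> {in allvars f, e =1 e'} -> Defs.eval n w e f = Defs.eval n w e' f.
Proof.
elim: f => //= [r args _ ee'|g IH qg ee'|g IHg h IHh /andP[qg qh] ee'|
                g IHg h IHh /andP[qg qh] ee'].
- by congr (w r _); apply/eq_in_map.
- by rewrite IH.
all: by rewrite (IHg qg) ?(IHh qh) // => v vf; apply: ee'; rewrite mem_cat vf ?orbT.
Qed.

Lemma eq_eval_structure n w w' e (f : formula S Rel) :
  qfree f -> well_sorted ar f ->
  (forall r args, r \in rels f -> {subset args <= allvars f} ->
     map fst args = ar r -> w r (map e args) = w' r (map e args)) ->
  Defs.eval n w e f = Defs.eval n w' e f.
Proof.
elim: f => //= [r args _ /eqP ws ww'|g IH qg wg ww'|
                g IHg h IHh /andP[qg qh] /andP[wg wh] ww'|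
                g IHg h IHh /andP[qg qh] /andP[wg wh] ww'].
- by apply: ww' => //; rewrite mem_head.
- by rewrite IH.
all: rewrite (IHg qg wg) ?(IHh qh wh) // => r args rf sa ma; apply: ww' => //;
  by rewrite ?mem_cat ?rf ?orbT // => v /sa vf; rewrite mem_cat vf ?orbT.
Qed.

Variable R : realType.

Lemma frac_ge0_le1 n w r (c : cformula S Rel) a : 0 <= Defs.frac R ar n w r c a <= 1.
Proof.
rewrite /Defs.frac; set k := count _ _; set m := size _.
have [->|m0] := eqVneq m 0%N; first by rewrite invr0 mulr0 lexx ler01.
have km : (k <= m)%N by apply: count_size.
by rewrite divr_ge0 //= ler_pdivrMr ?ltr0n ?lt0n // mul1r ler_nat.
Qed.

Lemma frac_qfree n w r (c : cformula S Rel) a :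
  nonempty_domain n -> qfree c.2 -> all (fun v => v \in xvars ar r) (allvars c.2) ->
  Defs.frac R ar n w r c a = (Defs.eval n w (assign ar r c.1 a [::]) c.2)%:R.
Proof.
move=> n_gt0 qc /allP cx; rewrite /Defs.frac.
have eval_b b : Defs.eval n w (assign ar r c.1 a b) c.2 =
                Defs.eval n w (assign ar r c.1 a [::]) c.2.
  by apply: eq_eval_env => // v /cx vx; rewrite /assign vx.
rewrite (eq_count eval_b); case: (Defs.eval _ _ _ _).
  by rewrite count_predT divff // pnatr_eq0 -lt0n size_tuples_gt0.
by rewrite count_pred0 mul0r.
Qed.

End Formulas.

Section QuantifierFreeNetwork.
Variables (R : realType) (S Rel : finType) (ar : Rel -> seq S) (B : flbn R S Rel).
Hypotheses (B_wf : flbn_wf ar B) (B_qf : qf_lbn ar B).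
Implicit Types (n : S -> nat) (E : seq (var S)) (w : structure Rel).

Let c0 : cformula S Rel := ([::], FTrue).

Let chi_qfree r i : (i < size (chis B r))%N ->
  qfree (nth c0 (chis B r) i).2 &&
  all (fun v => v \in xvars ar r) (allvars (nth c0 (chis B r) i).2).
Proof. by move=> ir; apply: (all_nthP c0 (B_qf r)). Qed.

Let chi_wf r i :
  (i < size (chis B r))%N -> cformula_wf ar (dag B) r (nth c0 (chis B r) i).
Proof.
by move=> ir; case: B_wf => _ chis_wf _ _; apply: (all_nthP c0 (chis_wf r)).
Qed.

Lemma atom_prob_size n n' w r a : nonempty_domain n -> nonempty_domain n' ->
  atom_prob ar B n w r a = atom_prob ar B n' w r a.
Proof.
move=> n_gt0 n'_gt0; rewrite /atom_prob; congr (comb _); apply/rowP => i.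
have /andP[qchi chix] := chi_qfree (ltn_ord i).
by rewrite !mxE !frac_qfree // (eval_qfree_size n n').
Qed.

Lemma atom_prob_ge0_le1 n w r a : 0 <= atom_prob ar B n w r a <= 1.
Proof.
case: B_wf => _ _ _ comb01; apply: comb01; rewrite inE => i.
by rewrite mxE frac_ge0_le1.
Qed.

(* [zip (ar r) a] lists the elements of [a] with their sorts. *)
Lemma atom_prob_local n r a w w' : size a = size (ar r) ->
  (forall r' t, dag B r' r -> t \in etuples (zip (ar r) a) (ar r') ->
     w r' t = w' r' t) ->
  atom_prob ar B n w r a = atom_prob ar B n w' r a.
Proof.
move=> sa ww'; rewrite /atom_prob; congr (comb _); apply/rowP => i; rewrite !mxE.
have /andP[qchi /allP chix] := chi_qfree (ltn_ord i).
have := chi_wf (ltn_ord i).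
case: (nth c0 (chis B r) i) qchi chix => ys f /= qf fx /and5P[_ _ wsf /allP fpar _].
rewrite /Defs.frac /=; congr (_%:R / _); apply: eq_count => b /=.
apply: (eq_eval_structure (ar := ar)) => // r' args r'f argsf sargs.
apply: ww'; first exact: fpar.
rewrite mem_etuples size_map -sargs size_map eqxx /= zip_map all_map.
apply/allP => v /argsf /fx vx /=; have [v2 v1 iv] := mem_xvars vx.
rewrite /assign vx iv.
have -> : (v.1, nth 0%N a v.2) = nth (v.1, 0%N) (zip (ar r) a) v.2.
  by rewrite nth_zip // -v1.
by apply: mem_nth; rewrite size_zip sa minnn.
Qed.

Definition atom : Type := Rel * seq nat.

Definition structure_of (v : atom -> bool) : structure Rel := fun r t => v (r, t).

Definition ground_prob n (x : atom) (v : atom -> bool) : R :=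
  atom_prob ar B n (structure_of v) x.1 x.2.

(* Being quantifier-free, [R(a)] only sees parent atoms over the elements of [a]. *)
Definition atom_parent (z x : atom) : bool :=
  dag B z.1 x.1 && (z.2 \in etuples (zip (ar x.1) x.2) (ar z.1)).

Lemma atom_parent_has_sinks : has_sinks atom_parent.
Proof.
apply: (has_sinks_homo (f := fst) (e' := dag B)) => [z x /andP[] //|].
by apply: acyclic_has_sinks; case: B_wf.
Qed.

Lemma ground_prob_local n : {in ground_atoms ar n, forall x v v',
  {in atom_parent^~ x, v =1 v'} -> ground_prob n x v = ground_prob n x v'}.
Proof.
move=> x; rewrite mem_ground_atoms mem_tuples => /andP[/eqP sx _] v v' vv'.
by apply: atom_prob_local => // r' t r'x tx; apply: vv'; apply/andP.
Qed.

Definition Pn_expect n (Psi : structure Rel -> R) : R :=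
  bsum (ground_atoms ar n)
    (fun v => world_prob ar B n (structure_of v) * Psi (structure_of v)).

Lemma Pn_expectE n E Y : Pn ar B n E Y = Pn_expect n (fun w => (in_cyl ar E Y w)%:R).
Proof. by rewrite /Pn /Pn_expect -bsum_bitseqs. Qed.

Lemma world_prob_factor n v :
  world_prob ar B n (structure_of v) =
  \prod_(x <- ground_atoms ar n) bn_factor (ground_prob n) x v.
Proof. by apply: eq_bigr => -[r t]. Qed.

Lemma Pn_expectD n Psi Psi' :
  Pn_expect n (fun w => Psi w + Psi' w) = Pn_expect n Psi + Pn_expect n Psi'.
Proof. by rewrite /Pn_expect -bsumD; apply: eq_bsum => v; rewrite mulrDr. Qed.

Lemma Pn_expect0 n : Pn_expect n (fun _ => 0) = 0.
Proof.
rewrite /Pn_expect -[RHS](mul0r (bsum (ground_atoms ar n) (fun=> 1))) -bsumZ.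
by apply: eq_bsum => v; rewrite mulr0 mul0r.
Qed.

Lemma Pn_expect_ge0 n Psi : (forall w, 0 <= Psi w) -> 0 <= Pn_expect n Psi.
Proof.
move=> Psi_ge0; apply: bsum_ge0 => v; rewrite mulr_ge0 // /world_prob.
apply: prodr_ge0 => g _.
have /andP[p_ge0 p_le1] := atom_prob_ge0_le1 n (structure_of v) g.1 g.2.
by case: ifP; rewrite ?subr_ge0.
Qed.

Lemma Pn_expect1 n : Pn_expect n (fun _ => 1) = 1.
Proof.
rewrite /Pn_expect; under eq_bsum => v do rewrite world_prob_factor.
rewrite (@bn_marginal _ _ _ atom_parent _ [::] (fun _ => 1)) /= ?big_nil ?mulr1 //.
- exact: uniq_ground_atoms.
- exact: ground_prob_local.
- exact: atom_parent_has_sinks.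
Qed.

Definition determined_by E (T : Type) (f : structure Rel -> T) : Prop :=
  forall w w', (forall r t, t \in etuples E (ar r) -> w r t = w' r t) -> f w = f w'.

Definition atoms_over E : seq atom :=
  undup [seq (r, t) | r <- enum Rel, t <- etuples E (ar r)].

Lemma mem_atoms_over E x : (x \in atoms_over E) = (x.2 \in etuples E (ar x.1)).
Proof.
rewrite mem_undup; apply/allpairsPdep/idP => [[r [t [_ tE ->]]] //|xE].
by exists x.1, x.2; rewrite mem_enum xE; case: x xE.
Qed.

(* The atoms over [E] are closed under parents, so summing out the others
   leaves a finite network whose factors no longer see the domain sizes. *)
Lemma Pn_expect_marginal n E Psi :
  nonempty_domain n -> cyl_defined n E -> determined_by E Psi ->
  Pn_expect n Psi = bsum (atoms_over E) (fun v =>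
    \prod_(x <- atoms_over E) bn_factor (ground_prob n) x v * Psi (structure_of v)).
Proof.
move=> n_gt0 nE PsiE; rewrite /Pn_expect.
under eq_bsum => v do rewrite world_prob_factor.
apply: (bn_marginal (parent := atom_parent)).
- exact: uniq_ground_atoms.
- exact: undup_uniq.
- move=> x; rewrite mem_atoms_over mem_ground_atoms mem_tuples mem_etuples.
  case/andP=> -> /allP xE /=; apply/allP => z /xE zE.
  by move/allP: nE => /(_ z zE).
- exact: ground_prob_local.
- move=> x; rewrite mem_atoms_over mem_etuples => /andP[_ /allP xE] z /andP[_].
  rewrite mem_atoms_over !mem_etuples => /andP[-> /allP zx] /=.
  by apply/allP => q /zx /xE.
- exact: atom_parent_has_sinks.
- by move=> v v' vv'; apply: PsiE => r t tE; apply: vv'; rewrite mem_atoms_over.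
Qed.

Lemma Pn_expect_domain_invariant n n' E Psi :
  nonempty_domain n -> nonempty_domain n' -> cyl_defined n E -> cyl_defined n' E ->
  determined_by E Psi -> Pn_expect n Psi = Pn_expect n' Psi.
Proof.
move=> n_gt0 n'_gt0 nE n'E PsiE; rewrite !(Pn_expect_marginal _ _ PsiE) //.
apply: eq_bsum => v; congr (_ * _); apply: eq_bigr => x _.
by rewrite /bn_factor /ground_prob (atom_prob_size _ _ _ n_gt0 n'_gt0).
Qed.

Lemma determined_by_in_cyl E Y : determined_by E (in_cyl ar E Y).
Proof.
move=> w w' ww'; apply: eq_all => r; apply: eq_in_all => t tE.
by rewrite ww'.
Qed.

Lemma determined_by_cyl E Y : determined_by E (cyl ar E Y).
Proof. by move=> w w' /(@determined_by_in_cyl E Y w w'); rewrite /cyl /= => ->. Qed.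

Lemma flbn_projective : projective ar B.
Proof.
move=> E Y n n' n_gt0 n'_gt0 nE n'E; rewrite !Pn_expectE.
apply: (Pn_expect_domain_invariant (E := E)) => // w w'.
by move/(@determined_by_in_cyl E Y w w') => ->.
Qed.

End QuantifierFreeNetwork.

Local Open Scope classical_set_scope.

Definition structure_space (Rel : Type) : Type :=
  prod_topology (fun _ : Rel => prod_topology (fun _ : seq nat => bool)).
HB.instance Definition _ (Rel : Type) := Pointed.on (structure_space Rel).
HB.instance Definition _ (Rel : Type) := Nbhs.on (structure_space Rel).
HB.instance Definition _ (Rel : Type) := Topological.on (structure_space Rel).

Lemma compact_structure_space (Rel : eqType) : compact [set: structure_space Rel].
Proof.
have compact_row : compact [set: prod_topology (fun _ : seq nat => bool)].
  have := @tychonoff _ (fun _ : seq nat => _) _ (fun=> bool_compact).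
  by congr (compact _); rewrite eqEsubset.
have := @tychonoff _ (fun _ : Rel => _) _ (fun=> compact_row).
by congr (compact _); rewrite eqEsubset.
Qed.

Lemma nbhs_atoms (Rel : eqType) (w : structure_space Rel) (l : seq (Rel * seq nat)) :
  nbhs w [set w' : structure_space Rel | {in l, forall x, w' x.1 x.2 = w x.1 x.2}].
Proof.
have nbhs_atom r t : nbhs w [set w' : structure_space Rel | w' r t = w r t].
  have row_nbhs : nbhs (w r) [set v : prod_topology _ | v t = w r t].
    exact: (@proj_continuous (seq nat) (fun _ => bool) t (w r) [set w r t]).
  exact: (@proj_continuous Rel (fun _ => prod_topology _) r w _ row_nbhs).
elim: l => [|x l IH]; first by apply: filterS filterT.
apply: filterS (filterI (nbhs_atom x.1 x.2) IH) => w' [wx wl] z.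
by rewrite in_cons => /predU1P[->|/wl].
Qed.

Section CylinderSets.
Variables (S Rel : finType) (ar : Rel -> seq S).
Implicit Types (E : seq (var S)) (C : set (structure Rel)).

Definition cylinder_sets : set (set (structure Rel)) :=
  [set C | exists E, determined_by ar E C].

Lemma determined_by_sub E E' (T : Type) (f : structure Rel -> T) :
  {subset E <= E'} -> determined_by ar E f -> determined_by ar E' f.
Proof.
by move=> EE' fE w w' ww'; apply: fE => r t /(etuples_sub EE'); apply: ww'.
Qed.

Lemma determined_by_comp E (T U : Type) (h : T -> U) (f : structure Rel -> T) :
  determined_by ar E f -> determined_by ar E (h \o f).
Proof. by move=> fE w w' /fE /= ->. Qed.

Lemma determined_by2 E (T1 T2 U : Type) (h : T1 -> T2 -> U) f g :
  determined_by ar E f -> determined_by ar E g ->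
  determined_by ar E (fun w => h (f w) (g w)).
Proof. by move=> fE gE w w' ww'; rewrite (fE _ _ ww') (gE _ _ ww'). Qed.

Lemma determined_by_open E C : determined_by ar E C -> @open (structure_space Rel) C.
Proof.
move=> CE; rewrite openE => w Cw.
apply: filterS (nbhs_atoms w (atoms_over ar E)) => w' ww'.
rewrite -(CE w) // => r t tE; apply/esym/(ww' (r, t)).
by rewrite mem_atoms_over.
Qed.

(* Cylinder sets are clopen in a compact space, so a cylinder covered by
   disjoint cylinders is covered by finitely many of them. *)
Lemma cylinder_bigcup_finite (F : nat -> set (structure Rel)) :
  (forall i, cylinder_sets (F i)) -> trivIset setT F ->
  cylinder_sets (\bigcup_i F i) -> exists N, forall j, (N <= j)%N -> F j = set0.
Proof.
move=> Fcyl Ftriv [E UE].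
have compactU : @compact (structure_space Rel) (\bigcup_i F i).
  have closedU : @closed (structure_space Rel) (\bigcup_i F i).
    rewrite -[X in closed X]setCK; apply: open_closedC.
    exact: (determined_by_open (determined_by_comp not UE)).
  exact: (subclosed_compact closedU (@compact_structure_space Rel) (@subsetT _ _)).
rewrite compact_cover in compactU.
have [i _|w [i _ Fiw]|D _ FD] := compactU nat setT F.
- by have [Ei FiE] := Fcyl i; exact: (determined_by_open FiE).
- by exists i.
exists (\max_(i <- finmap.enum_fset D) i).+1 => j ltDj.
apply/seteqP; split => // w Fjw.
have [i iD Fiw] := FD w (ex_intro2 _ _ j I Fjw).
have ij := Ftriv i j I I (ex_intro _ w (conj Fiw Fjw)); subst j.
by move: ltDj; rewrite ltnNge (leq_bigmax_seq i).
Qed.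

Lemma cylinder_sets0 : cylinder_sets set0.
Proof. by exists [::]. Qed.

Lemma cylinder_sets2 C1 C2 : cylinder_sets C1 -> cylinder_sets C2 ->
  exists E, determined_by ar E C1 /\ determined_by ar E C2.
Proof.
move=> [E1 C1E] [E2 C2E]; exists (E1 ++ E2).
split; [apply: determined_by_sub C1E | apply: determined_by_sub C2E];
  by move=> e; rewrite mem_cat => ->; rewrite ?orbT.
Qed.

Lemma cylinder_setsU : setU_closed cylinder_sets.
Proof.
move=> C1 C2 /cylinder_sets2/[apply] -[E [C1E C2E]].
by exists E; apply: (determined_by2 or).
Qed.

Lemma cylinder_setsD : setD_closed cylinder_sets.
Proof.
move=> C1 C2 /cylinder_sets2/[apply] -[E [C1E C2E]].
by exists E; apply: (determined_by2 (fun a b => a /\ ~ b)).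
Qed.

(* Indexed by [ar] so that its ring of cylinder sets can be canonical. *)
Definition cylinder_space (_ : Rel -> seq S) : Type := structure Rel.
HB.instance Definition _ := Pointed.on (cylinder_space ar).
HB.instance Definition _ := @isRingOfSets.Build default_measure_display
  (cylinder_space ar) cylinder_sets cylinder_sets0 cylinder_setsU cylinder_setsD.

End CylinderSets.

Section LimitMeasure.
Variables (R : realType) (S Rel : finType) (ar : Rel -> seq S) (B : flbn R S Rel).
Hypotheses (B_wf : flbn_wf ar B) (B_qf : qf_lbn ar B).
Implicit Types (n : S -> nat) (E : seq (var S)) (C : set (structure Rel)).

Definition fit_domain E : S -> nat := fun _ => (\max_(e <- E) e.2).+1.

Lemma fit_domain_gt0 E : nonempty_domain (fit_domain E).
Proof. by apply/forallP. Qed.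

Lemma cyl_defined_fit_domain E : cyl_defined (fit_domain E) E.
Proof. by apply/allP => e eE; rewrite ltnS; apply: (leq_bigmax_seq e). Qed.

Lemma determined_by_indic E C :
  determined_by ar E C -> determined_by ar E (\1_C : structure Rel -> R).
Proof.
move=> CE w w' ww'; rewrite !indicE; congr ((nat_of_bool _)%:R).
by apply/idP/idP; rewrite !in_setE (CE _ _ ww').
Qed.

(* [xget] picks some [E] determining [C]; by [cylinder_measureE] the value does
   not depend on that choice. *)
Definition cylinder_measure (C : set (cylinder_space ar)) : \bar R :=
  (Pn_expect ar B (fit_domain (xget [::] (fun E => determined_by ar E C))) \1_C)%:E.

Lemma cylinder_measureE E C n :
  determined_by ar E C -> nonempty_domain n -> cyl_defined n E ->
  cylinder_measure C = (Pn_expect ar B n \1_C)%:E.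
Proof.
move=> CE n_gt0 nE; rewrite /cylinder_measure; congr (_%:E).
have := xgetPex [::] (ex_intro (fun E => determined_by ar E C) E CE).
move: (xget _ _) => E0 C0; pose n0 := fit_domain (E0 ++ E).
have /andP[n0E0 n0E] : cyl_defined n0 E0 && cyl_defined n0 E.
  by rewrite /cyl_defined -all_cat; apply: cyl_defined_fit_domain.
have invariant := Pn_expect_domain_invariant B_wf B_qf.
rewrite (invariant _ n0 E0) ?fit_domain_gt0 ?cyl_defined_fit_domain //;
  last exact: determined_by_indic.
exact: invariant (fit_domain_gt0 _) n_gt0 n0E nE (determined_by_indic CE).
Qed.

Lemma cylinder_measure0 : cylinder_measure set0 = 0%E.
Proof.
rewrite (@cylinder_measureE [::] _ (fit_domain [::])) ?fit_domain_gt0 //.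
by rewrite indic0 Pn_expect0.
Qed.

Lemma cylinder_measure_ge0 C : (0 <= cylinder_measure C)%E.
Proof.
by rewrite lee_fin Pn_expect_ge0 // => w; rewrite indicE ler0n.
Qed.

Lemma cylinder_measure_additive2 : additive2 cylinder_measure.
Proof.
move=> C1 C2 /cylinder_sets2/[apply] -[E [C1E C2E]] C12.
have CE := determined_by2 or C1E C2E.
have [n_gt0 nE] := (fit_domain_gt0 E, cyl_defined_fit_domain E).
rewrite !(cylinder_measureE _ n_gt0 nE) // -EFinD -Pn_expectD.
congr (Pn_expect _ _ _ _)%:E; apply: boolp.funext => w; rewrite !indicE in_setU.
have [wC1|_] := boolP (w \in C1); last by rewrite add0r.
have [wC2|_] := boolP (w \in C2); last by rewrite addr0.
suff : (C1 `&` C2) w by rewrite C12.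
by split; apply: set_mem.
Qed.

Lemma cylinder_measure_sigma_additive : semi_sigma_additive cylinder_measure.
Proof.
move=> F Fcyl Ftriv Ucyl; have [N FN] := cylinder_bigcup_finite Fcyl Ftriv Ucyl.
have mu_add := (additive2P cylinder_measure0).2 cylinder_measure_additive2.
apply: cvg_near_cst; exists N => // n /= Nn.
rewrite big_mkord -mu_add //; last exact: bigsetU_measurable.
congr cylinder_measure; rewrite -bigcup_mkord; apply/seteqP; split => w [i _ Fiw].
  by exists i.
exists i => //=; rewrite ltnNge; apply/negP => ni.
by move: Fiw; rewrite FN // (leq_trans Nn ni).
Qed.

HB.instance Definition _ := isMeasure.Build _ (cylinder_space ar) R cylinder_measure
  cylinder_measure0 cylinder_measure_ge0 cylinder_measure_sigma_additive.

Definition limit_measure : set (OmegaInf ar) -> \bar R :=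
  measure_extension cylinder_measure.

Lemma gen_sets_sub_cylinder_sigma A :
  <<s gen_sets ar >> A -> <<s cylinder_sets ar >> A.
Proof.
apply: smallest_sub; first exact: smallest_sigma_algebra.
move=> _ [E [Y ->]]; apply: sub_sigma_algebra.
by exists E; apply: determined_by_cyl.
Qed.

Lemma limit_measure_sigma_additive : semi_sigma_additive limit_measure.
Proof.
move=> F Fmeas Ftriv Umeas.
exact: (measure_semi_sigma_additive (s := measure_extension cylinder_measure) F
  (fun i => gen_sets_sub_cylinder_sigma (Fmeas i)) Ftriv
  (gen_sets_sub_cylinder_sigma Umeas)).
Qed.

Lemma limit_measure0 : limit_measure set0 = 0%E.
Proof. exact: measure0. Qed.

Lemma limit_measure_ge0 A : (0 <= limit_measure A)%E.
Proof. exact: measure_ge0. Qed.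

HB.instance Definition _ := isMeasure.Build _ (OmegaInf ar) R limit_measure
  limit_measure0 limit_measure_ge0 limit_measure_sigma_additive.

Lemma limit_measureE E C n :
  determined_by ar E C -> nonempty_domain n -> cyl_defined n E ->
  limit_measure C = (Pn_expect ar B n \1_C)%:E.
Proof.
move=> CE n_gt0 nE; rewrite /limit_measure /measure_extension measurable_mu_extE /=.
  exact: cylinder_measureE CE n_gt0 nE.
by exists E.
Qed.

Lemma limit_measureT : limit_measure setT = 1%E.
Proof.
rewrite (@limit_measureE [::] _ (fit_domain [::])) ?fit_domain_gt0 //.
by rewrite indicT Pn_expect1.
Qed.

HB.instance Definition _ :=
  Measure_isProbability.Build _ (OmegaInf ar) R limit_measure limit_measureT.

End LimitMeasure.

Section Asymptotics.
Variables (S : finType) (ns : nat -> S -> nat).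
Hypotheses (ns_mono : forall k s, (ns k s <= ns k.+1 s)%N)
           (ns_unbounded : forall s M, exists k, (M <= ns k s)%N).

Lemma near_cyl_defined E : \forall k \near \oo, cyl_defined (ns k) E.
Proof.
elim: E => [|[s i] E IH]; first exact: nearW.
have [k0 ik0] := ns_unbounded s i.+1.
apply: filterS2 IH (nbhs_infty_ge k0) => k /= kE k0k; rewrite kE andbT.
exact: leq_trans ik0 (homo_leq leqnn leq_trans (ns_mono^~ s) k0k).
Qed.

Lemma near_nonempty_domain : \forall k \near \oo, nonempty_domain (ns k).
Proof.
apply: filterS (near_cyl_defined [seq (s, 0%N) | s <- enum S]) => k /allP k_gt0.
by apply/forallP => s; apply: (k_gt0 (s, 0%N)); rewrite map_f ?mem_enum.
Qed.

End Asymptotics.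

Section Limit.
Variables (R : realType) (S Rel : finType) (ar : Rel -> seq S) (B : flbn R S Rel).
Hypotheses (B_wf : flbn_wf ar B) (B_qf : qf_lbn ar B).

Lemma limit_measure_cyl E Y n : nonempty_domain n -> cyl_defined n E ->
  limit_measure B_wf B_qf (cyl ar E Y) = (Pn ar B n E Y)%:E.
Proof.
move=> n_gt0 nE; rewrite (limit_measureE _ _ _ n_gt0 nE) ?Pn_expectE.
  congr (Pn_expect _ _ _ _)%:E; apply: boolp.funext => w; rewrite indicE.
  by congr ((nat_of_bool _)%:R); apply/idP/idP; rewrite in_setE.
exact: determined_by_cyl.
Qed.

Lemma limit_measure_asymptotic : asymptotic_limit B (limit_measure B_wf B_qf).
Proof.
move=> ns ns_mono ns_unbounded E Y.
change ((fun k => Pn ar B (ns k) E Y) @ \oo -->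
  fine (limit_measure B_wf B_qf (cyl ar E Y))).
apply: cvg_near_cst.
apply: filterS2 (near_nonempty_domain ns_mono ns_unbounded)
  (near_cyl_defined ns_mono ns_unbounded E) => k k_gt0 kE.
by rewrite (limit_measure_cyl Y k_gt0 kE).
Qed.

End Limit.

Theorem proposition2 (R : realType) (S Rel : finType) (ar : Rel -> seq S)
  (B : flbn R S Rel) :
  flbn_wf ar B -> qf_lbn ar B ->
  projective ar B /\
  exists P : probability (OmegaInf ar) R, asymptotic_limit B P.
Proof.
move=> B_wf B_qf; split; first exact: flbn_projective.
by eexists; apply: limit_measure_asymptotic.
Qed.
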